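(* Let $t=B(r,t_1,\dots,t_k)$ be a rooted tree with vertex set $I$, $k\geq1$. Then the interval $[\widehat{0},t]$ in $\Pi_{\operatorname{NAP}}(I)$ is isomorphic to the product over $j\in\{1,\dots,k\}$ of the posets $[\widehat{0},B(r,t_j)]$ (each taken in $\Pi_{\operatorname{NAP}}$ of the vertex set of $B(r,t_j)$).
   Context: $B(r,t_1,\dots,t_k)$ denotes the rooted tree obtained from rooted trees $t_1,\dots,t_k$ on disjoint vertex sets by adding a new vertex $r$, which becomes the root, and an edge from $r$ to the root of each $t_i$. $\Pi_{\operatorname{NAP}}(I)$ is the set of forests of rooted trees whose vertex set is exactly $I$, partially ordered as follows: $y$ covers $x$ iff $y$ is obtained from $x$ by adding an edge from the root of one component of $x$ to the root of another component (the latter root remaining the root); $\leq$ is the reflexive–transitive closure. $\widehat{0}$ is the forest of one-vertex trees. *)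

From Stdlib Require Import Relations.
From mathcomp Require Import all_boot.
Set Implicit Arguments. Unset Strict Implicit. Unset Printing Implicit Defensive.

(* A (rooted) forest whose vertices live in an ambient finite type T is encoded
   by its parent function: f x = Some y means y is the parent of x,
   f x = None means x is a root (or x is not a vertex). *)
Definition pforest (T : finType) := {ffun T -> option T}.

Section NAP.
Variable T : finType.

Definition anc (f : pforest T) (n : nat) (x : T) : option T :=
  iter n (fun o => obind f o) (Some x).

Definition is_forest (I : {set T}) (f : pforest T) : Prop :=
  (forall x, x \notin I -> f x = None) /\
  (forall x y, f x = Some y -> y \in I) /\
  (forall x, x \in I -> exists n, anc f n x = None).

Definition roots (I : {set T}) (f : pforest T) : {set T} :=
  [set x in I | f x == None].

Definition is_tree (I : {set T}) (f : pforest T) : Prop :=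
  is_forest I f /\ #|roots I f| = 1.

Definition zero_forest : pforest T := [ffun _ => None].

Definition nap_cover (I : {set T}) (x y : pforest T) : Prop :=
  is_forest I x /\ is_forest I y /\
  exists a b, a \in I /\ b \in I /\ a != b /\ x a = None /\ x b = None /\
    y = [ffun v => if v == a then Some b else x v].

Definition nap_le (I : {set T}) (x y : pforest T) : Prop :=
  is_forest I x /\ is_forest I y /\ clos_refl_trans _ (nap_cover I) x y.

Definition nap_interval (I : {set T}) (t x : pforest T) : Prop :=
  nap_le I zero_forest x /\ nap_le I x t.

(* B(r, t_1, ..., t_k): trees t_j with vertex sets V j *)
Definition graft (k : nat) (r : T) (V : 'I_k -> {set T})
    (ts : 'I_k -> pforest T) : pforest T :=
  [ffun x => match [pick j | x \in V j] with
             | Some j => if ts j x is Some y then Some y else Some r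
             | None => None
             end].

Definition graft_vertices (k : nat) (r : T) (V : 'I_k -> {set T}) : {set T} :=
  r |: \bigcup_(j < k) V j.

End NAP.

From Stdlib Require Import Relations.
From mathcomp Require Import all_boot.
Set Implicit Arguments. Unset Strict Implicit. Unset Printing Implicit Defensive.

(* In Pi_NAP(I) a forest x lies below y exactly when every edge of x is an
   edge of y and y gives no new child to a vertex that has a parent in x.
   Below t = B(r, t_1, ..., t_k) the vertex r is always a root and every
   edge of t stays inside one branch B(r, t_j), so restricting a forest to
   the vertices of t_j and gluing such restrictions back together are
   mutually inverse and both respect this edgewise order. *)

Section ForestOrder.
Variable T : finType.
Implicit Types (I A S : {set T}) (f g x y z : pforest T).

(* Edges are only ever added between roots, so going up in Pi_NAP keeps every
   edge and never gives a new child to a vertex that already has a parent. *)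
Definition forest_le x y : Prop :=
  (forall v p, x v = Some p -> y v = Some p) /\
  (forall v w, x v != None -> y w = Some v -> x w = Some v).

Definition restrict A x : pforest T := [ffun v => if v \in A then x v else None].

Lemma forest_le_refl x : forest_le x x.
Proof. by split. Qed.

Lemma forest_le_trans x y z : forest_le x y -> forest_le y z -> forest_le x z.
Proof.
move=> [xy1 xy2] [yz1 yz2]; split=> [v p /xy1 /yz1 //|v w xv zw].
apply: xy2 (yz2 _ _ _ zw) => //.
by case xvE: (x v) xv => [p|] //; rewrite (xy1 _ _ xvE).
Qed.

Lemma nap_cover_forest_le I x y : nap_cover I x y -> forest_le x y.
Proof.
move=> [_ [_ [a [b [_ [_ [_ [xa [xb ->]]]]]]]]]; split=> [v p xv|v w xv].
- by rewrite ffunE; case: eqP => [va|//]; rewrite va xa in xv.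
- by rewrite ffunE; case: eqP => [_ [vb]|//]; rewrite -vb xb in xv.
Qed.

Lemma clos_nap_cover_forest_le I x y :
  clos_refl_trans _ (nap_cover I) x y -> forest_le x y.
Proof.
elim=> [? ? /nap_cover_forest_le //|?|? ? ? _ xy _ yz].
- exact: forest_le_refl.
- exact: forest_le_trans xy yz.
Qed.

Lemma forest_le_restrict A x y :
  forest_le x y -> forest_le (restrict A x) (restrict A y).
Proof.
move=> [xy1 xy2]; split=> v p; rewrite !ffunE; first by case: ifP => // _ /xy1.
by case: ifP => // _; case: ifP => // _; apply: xy2.
Qed.

Lemma ancS f n v : anc f n.+1 v = if f v is Some p then anc f n p else None.
Proof.
rewrite /anc iterSr /=; case: (f v) => [p|] //.
by elim: n => //= n ->.
Qed.

Lemma ancSr f n v : anc f n.+1 v = obind f (anc f n v).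
Proof. by rewrite /anc iterS. Qed.

Lemma anc_subrel f g : (forall v p, f v = Some p -> g v = Some p) ->
  forall n v, anc f n v = None \/ anc f n v = anc g n v.
Proof.
move=> fg; elim=> [|n IHn] v; first by right.
rewrite !ancSr; case: (IHn v) => ->; first by left.
case: (anc g n v) => [u|] /=; last by left.
by case fuE: (f u) => [p|]; [right; rewrite (fg _ _ fuE) | left].
Qed.

Lemma anc_eq_on S f g : {in S, f =1 g} ->
  (forall u p, u \in S -> g u = Some p -> p \in S) ->
  forall n, {in S, anc f n =1 anc g n}.
Proof.
move=> fg gS; elim=> [//|n IHn] v vS.
rewrite !ancS fg //; case guE: (g v) => [p|] //.
exact: IHn (gS _ _ vS guE).
Qed.

(* Redirecting some roots of g to roots of f can lengthen a path to a root
   by at most one step. *)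
Lemma anc_root_edges f g :
  (forall u, f u = g u \/ (g u = None /\ exists p, f u = Some p /\ f p = None)) ->
  forall n v, anc g n v = None -> anc f n.+1 v = None.
Proof.
move=> fg n v.
have ancE m : anc f m v = anc g m v \/ (anc g m v = None /\
    (anc f m v = None \/ exists p, anc f m v = Some p /\ f p = None)).
  elim: m => [|m [IHm|[IHg IHf]]]; first by left.
  - rewrite !ancSr IHm; case: (anc g m v) => [u|] /=; last by left.
    case: (fg u) => [->|[-> [p [fu fp]]]]; first by left.
    by right; split => //; right; exists p.
  - rewrite !ancSr IHg; right; split => //; left.
    by case: IHf => [->|[p [-> fp]]].
move=> gn; rewrite ancSr.
by case: (ancE n) => [->|[_ [->|[p [-> fp]]]]]; rewrite ?gn.
Qed.

Lemma is_forest_subrel I f g :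
  is_forest I g -> (forall v p, f v = Some p -> g v = Some p) -> is_forest I f.
Proof.
move=> [gI [gpar gend]] fg; split; [|split].
- by move=> v /gI; case fvE: (f v) => [p|] //; rewrite (fg _ _ fvE).
- by move=> v p /fg /gpar.
- move=> v /gend [n gn]; exists n.
  by case: (anc_subrel fg n v) => // ->.
Qed.

Lemma is_forest_zero I : is_forest I (zero_forest T).
Proof.
split; [|split] => [v _|v p|v _]; rewrite ?ffunE //.
by exists 1; rewrite /anc /= ffunE.
Qed.

(* Climbing from a vertex w that is a root of x but not of y, the first
   vertex whose y-parent is a y-root is still a root of x. *)
Lemma forest_le_root_edge x y n w : forest_le x y ->
  anc y n w = None -> x w = None -> y w <> None ->
  exists w' v', [/\ x w' = None, y w' = Some v' & y v' = None].
Proof.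
move=> [_ xy2]; elim: n w => [//|n IHn] w.
rewrite ancS; case ywE: (y w) => [v|] // yn xw _.
case yvE: (y v) => [u|]; last by exists w, v.
apply: (IHn v) => //; last by rewrite yvE.
case xvE: (x v) => [q|] //.
by have := xy2 v w; rewrite xvE xw ywE => /(_ isT erefl).
Qed.

Lemma forest_le_cover_step I x y w0 :
  is_forest I y -> forest_le x y -> y w0 != x w0 ->
  exists y', [/\ is_forest I y', forest_le x y', nap_cover I y' y &
    #|[set u | y' u != x u]| < #|[set u | y u != x u]|].
Proof.
move=> Fy xy yw0.
have xw0 : x w0 = None by case xw0E: (x w0) yw0 => [p|] //; rewrite (xy.1 _ _ xw0E) eqxx.
have yw0N : y w0 <> None by move=> yw0E; rewrite yw0E xw0 in yw0.
have w0I : w0 \in I by apply/negPn/negP => /Fy.1.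
have [n yn] := Fy.2.2 _ w0I.
have [w [v [xw ywv yv]]] := forest_le_root_edge xy yn xw0 yw0N.
pose y' : pforest T := [ffun u => if u == w then None else y u].
have y'y u p : y' u = Some p -> y u = Some p by rewrite ffunE; case: eqP.
have wv : w != v by apply: contra_eqN yv => /eqP <-; rewrite ywv.
exists y'; split.
- exact: is_forest_subrel Fy y'y.
- split=> [u p xu|u u' xu /y'y]; last exact: xy.2.
  by rewrite ffunE; case: eqP => [uw|_]; [rewrite uw xw in xu | apply: xy.1].
- split; first exact: is_forest_subrel Fy y'y; split=> //.
  exists w, v; do !split=> //.
  + by apply/negPn/negP => /Fy.1; rewrite ywv.
  + exact: Fy.2.1 ywv.
  + by rewrite ffunE eqxx.
  + by rewrite ffunE eq_sym (negbTE wv).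
  + by apply/ffunP => u; rewrite !ffunE; case: eqP => [->|].
- apply/proper_card/properP; split; last by exists w; rewrite !inE ?ffunE ?eqxx ?ywv ?xw.
  by apply/subsetP => u; rewrite !inE ffunE; case: (u =P w) => [->|]; rewrite ?xw.
Qed.

Lemma forest_le_clos_nap_cover I x y : is_forest I y -> forest_le x y ->
  clos_refl_trans _ (nap_cover I) x y.
Proof.
have [m] := ubnP #|[set u | y u != x u]|; elim: m y => // m IHm y ltm Fy xy.
case: (pickP (fun u => y u != x u)) => [w0 yw0|same]; last first.
  suff -> : y = x by apply: rt_refl.
  by apply/ffunP => u; apply/eqP/negbFE/same.
have [y' [Fy' xy' y'y lt']] := forest_le_cover_step Fy xy yw0.
apply: rt_trans (IHm y' _ Fy' xy') (rt_step _ _ _ _ y'y).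
exact: leq_trans lt' _.
Qed.

Lemma nap_leP I x y :
  nap_le I x y <-> [/\ is_forest I x, is_forest I y & forest_le x y].
Proof.
split=> [[Fx [Fy /clos_nap_cover_forest_le]] //|[Fx Fy xy]].
by split=> //; split => //; apply: forest_le_clos_nap_cover.
Qed.

Lemma nap_intervalP I t x :
  nap_interval I t x <-> [/\ is_forest I t, is_forest I x & forest_le x t].
Proof.
split=> [[/nap_leP [_ Fx _] /nap_leP [_ Ft xt]] //|[Ft Fx xt]].
split; apply/nap_leP; split=> //; first exact: is_forest_zero.
by split=> // v p; rewrite ffunE.
Qed.

End ForestOrder.

Lemma graft1E (T : finType) (r : T) (A : {set T}) (s : pforest T) v :
  graft r (fun _ : 'I_1 => A) (fun _ => s) v =
  if v \in A then (if s v is Some p then Some p else Some r) else None.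
Proof.
rewrite ffunE; case: pickP => [_ -> //|/(_ ord0) vA].
by rewrite /= in vA; rewrite vA.
Qed.

Lemma mem_graft_vertices1 (T : finType) (r : T) (A : {set T}) v :
  (v \in graft_vertices r (fun _ : 'I_1 => A)) = (v == r) || (v \in A).
Proof. by rewrite /graft_vertices big_ord1 !inE. Qed.

Section Gluing.
Variables (T : finType) (k : nat) (r : T) (V : 'I_k -> {set T}).
Hypothesis V_disjoint : forall i j, i != j -> [disjoint V i & V j].
Hypothesis r_notin_V : forall j, r \notin V j.

Definition glue (y : 'I_k -> pforest T) : pforest T :=
  [ffun v => if [pick j | v \in V j] is Some j then y j v else None].

Let I := graft_vertices r V.
Let I_ j := graft_vertices r (fun _ : 'I_1 => V j).

Lemma mem_V_inj i j v : v \in V i -> v \in V j -> i = j.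
Proof.
move=> vi vj; apply/eqP; apply: contraTT vj => /V_disjoint ij.
by rewrite (disjointFr ij vi).
Qed.

Lemma mem_graft_vertices v : (v \in I) = (v == r) || [exists j, v \in V j].
Proof.
rewrite !inE; congr (_ || _).
by apply/bigcupP/existsP => [[j _ vj]|[j vj]]; exists j.
Qed.

Lemma glue_in (y : 'I_k -> pforest T) j v : v \in V j -> glue y v = y j v.
Proof.
move=> vj; rewrite ffunE.
case: pickP => [i vi|/(_ j)]; first by rewrite (mem_V_inj vi vj).
by rewrite vj.
Qed.

Lemma glue_out (y : 'I_k -> pforest T) v :
  (forall j, v \notin V j) -> glue y v = None.
Proof. by move=> vV; rewrite ffunE; case: pickP => [j|//]; rewrite (negbTE (vV j)). Qed.

Lemma graft_eq_glue (ts : 'I_k -> pforest T) :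
  graft r V ts = glue (fun j => graft r (fun _ : 'I_1 => V j) (fun _ => ts j)).
Proof.
apply/ffunP => v; rewrite !ffunE.
by case: pickP => // j vj; rewrite graft1E vj.
Qed.

Lemma forest_branch_out j (y : pforest T) v :
  is_forest (I_ j) y -> y r = None -> v \notin V j -> y v = None.
Proof.
move=> Fy yr vj; have [->|vr] := eqVneq v r; first exact: yr.
by apply: Fy.1; rewrite mem_graft_vertices1 negb_or vr.
Qed.

Lemma restrict_glue (y : 'I_k -> pforest T) j :
  (forall v, v \notin V j -> y j v = None) -> restrict (V j) (glue y) = y j.
Proof.
move=> yj; apply/ffunP => v; rewrite ffunE.
by case: ifPn => [/glue_in|/yj] ->.
Qed.

Lemma glue_restrict (x : pforest T) :
  (forall v, (forall j, v \notin V j) -> x v = None) -> glue (fun j => restrict (V j) x) = x.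
Proof.
move=> xV; apply/ffunP => v; rewrite ffunE.
case: pickP => [j vj|vV]; first by rewrite ffunE vj.
by rewrite xV // => j; rewrite vV.
Qed.

Lemma is_forest_graft1 j (s : pforest T) :
  is_forest (V j) s -> is_forest (I_ j) (graft r (fun _ : 'I_1 => V j) (fun _ => s)).
Proof.
move=> [sV [spar send]]; split; [|split] => [v|v p|v].
- by rewrite mem_graft_vertices1 negb_or graft1E => /andP [_ /negbTE ->].
- rewrite graft1E mem_graft_vertices1; case: ifP => // _.
  by case svE: (s v) => [q|] [<-]; rewrite ?eqxx // (spar _ _ svE) orbT.
- have graft1r : graft r (fun _ : 'I_1 => V j) (fun _ => s) r = None.
    by rewrite graft1E (negbTE (r_notin_V j)).
  rewrite mem_graft_vertices1 => /orP [/eqP ->|/send [n sn]].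
    by exists 1; rewrite ancS graft1r.
  exists n.+1; apply: anc_root_edges sn => u; rewrite graft1E.
  case: ifPn => [_|/sV ->]; last by left.
  by case: (s u) => [q|]; [left | right; split => //; exists r].
Qed.

Lemma is_forest_glue (y : 'I_k -> pforest T) : (forall j, is_forest (I_ j) (y j)) ->
  (forall j, y j r = None) -> is_forest I (glue y).
Proof.
move=> Fy yr; split; [|split] => [v|v p|v].
- rewrite mem_graft_vertices negb_or => /andP [_ vV].
  by apply: glue_out => j; apply: contra vV => vj; apply/existsP; exists j.
- rewrite ffunE; case: pickP => // j _ /(Fy j).2.1.
  rewrite mem_graft_vertices1 mem_graft_vertices => /orP [->//|pj].
  by apply/orP; right; apply/existsP; exists j.
- rewrite mem_graft_vertices => /orP [/eqP ->|/existsP [j vj]].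
    by exists 1; rewrite ancS glue_out.
  have vIj : v \in I_ j by rewrite mem_graft_vertices1 vj orbT.
  have [n yn] := (Fy j).2.2 _ vIj; exists n; rewrite -yn.
  apply: (anc_eq_on (S := I_ j)) => // [u|u p _ /(Fy j).2.1 //].
  rewrite mem_graft_vertices1 => /orP [/eqP ->|/glue_in //].
  by rewrite glue_out ?yr.
Qed.

Lemma is_forest_restrict j (x : pforest T) : is_forest I x -> x r = None ->
  (forall u p, u \in V j -> x u = Some p -> p \in I_ j) ->
  is_forest (I_ j) (restrict (V j) x).
Proof.
move=> Fx xr xpar; split; [|split] => [v|v p|v].
- by rewrite mem_graft_vertices1 negb_or ffunE => /andP [_ /negbTE ->].
- by rewrite ffunE; case: ifP => // /xpar; apply.
- move=> vIj; have [n xn] : exists n, anc x n v = None.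
    apply: Fx.2.2; move: vIj; rewrite mem_graft_vertices1 mem_graft_vertices.
    by case/orP=> [->//|vj]; apply/orP; right; apply/existsP; exists j.
  exists n; rewrite -xn; apply: (anc_eq_on (S := I_ j)) => // [u|u p].
    rewrite ffunE mem_graft_vertices1; case: ifP => [//|_].
    by rewrite orbF => /eqP ->.
  by rewrite mem_graft_vertices1 => /orP [/eqP ->|/xpar]; [rewrite xr | apply].
Qed.

Lemma forest_le_of_restrict (x y : pforest T) :
  (forall v, (forall j, v \notin V j) -> x v = None) -> x r = None ->
  (forall w v, y w = Some v -> exists j, w \in V j /\ (v \in V j \/ v = r)) ->
  (forall j, forest_le (restrict (V j) x) (restrict (V j) y)) -> forest_le x y.
Proof.
move=> xV xr yedge xy; split=> [v p xv|v w xv yw].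
- case: (pickP (fun j => v \in V j)) => [j vj|vV]; last first.
    by rewrite xV in xv => // j; rewrite vV.
  by have := (xy j).1 v p; rewrite !ffunE vj; apply.
- have [j [wj [vj|vr]]] := yedge _ _ yw; last by rewrite vr xr in xv.
  by have := (xy j).2 v w; rewrite !ffunE vj wj; apply.
Qed.

Section Graft.
Variable ts : 'I_k -> pforest T.
Hypothesis ts_forest : forall j, is_forest (V j) (ts j).

Let t := graft r V ts.
Let branch j := graft r (fun _ : 'I_1 => V j) (fun _ => ts j).

Lemma branch_r j : branch j r = None.
Proof. by rewrite graft1E (negbTE (r_notin_V j)). Qed.

Lemma branch_out j v : v \notin V j -> branch j v = None.
Proof. by rewrite graft1E => /negbTE ->. Qed.

Lemma forest_le_branch_r (y : pforest T) j : forest_le y (branch j) -> y r = None.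
Proof. by case yrE: (y r) => [p|] // [/(_ _ _ yrE)]; rewrite branch_r. Qed.

Lemma restrict_graft j : restrict (V j) t = branch j.
Proof. by rewrite /t graft_eq_glue restrict_glue // => v; apply: branch_out. Qed.

Lemma is_forest_graft : is_forest I t.
Proof.
rewrite /t graft_eq_glue; apply: is_forest_glue => j; last exact: branch_r.
exact: is_forest_graft1.
Qed.

Lemma graft_edge w v : t w = Some v -> exists j, w \in V j /\ (v \in V j \/ v = r).
Proof.
rewrite /t /graft ffunE; case: pickP => // j wj tw; exists j; split=> //; move: tw.
by case tswE: (ts j w) => [p|] [<-]; [left; apply: (ts_forest j).2.1 tswE | right].
Qed.

Lemma forest_le_graft_out (x : pforest T) v :
  forest_le x t -> (forall j, v \notin V j) -> x v = None.
Proof.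
move=> xt vV; case xvE: (x v) => [p|] //.
by have := xt.1 _ _ xvE; rewrite /t graft_eq_glue glue_out.
Qed.

Lemma nap_interval_restrict (x : pforest T) j :
  nap_interval I t x -> nap_interval (I_ j) (branch j) (restrict (V j) x).
Proof.
case/nap_intervalP=> _ Fx xt; apply/nap_intervalP; split.
- exact: is_forest_graft1.
- apply: is_forest_restrict => // [|u p uj /xt.1 tup].
    exact: forest_le_graft_out xt _.
  have [i [ui pi]] := graft_edge tup; rewrite -(mem_V_inj uj ui) in pi.
  by rewrite mem_graft_vertices1; case: pi => [->|->]; rewrite ?eqxx ?orbT.
- by rewrite -restrict_graft; apply: forest_le_restrict.
Qed.

Lemma nap_interval_glue (y : 'I_k -> pforest T) :
  (forall j, nap_interval (I_ j) (branch j) (y j)) ->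
  nap_interval I t (glue y).
Proof.
move=> yint.
have yr j : y j r = None by case/nap_intervalP: (yint j) => _ _ /forest_le_branch_r.
have Fy j : is_forest (I_ j) (y j) by case/nap_intervalP: (yint j).
apply/nap_intervalP; split; first exact: is_forest_graft.
  exact: is_forest_glue.
apply: forest_le_of_restrict => [v /glue_out //|||j]; first exact: glue_out.
  exact: graft_edge.
rewrite restrict_graft restrict_glue => [|v]; last exact: forest_branch_out.
by case/nap_intervalP: (yint j).
Qed.

Lemma nap_le_restrictP (x y : pforest T) : nap_interval I t x -> nap_interval I t y ->
  nap_le I x y <-> forall j, nap_le (I_ j) (restrict (V j) x) (restrict (V j) y).
Proof.
move=> xint yint; have /nap_intervalP [_ Fx xt] := xint.
have /nap_intervalP [_ Fy yt] := yint.
split=> [/nap_leP [_ _ xy] j|xy].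
- apply/nap_leP; split; last exact: forest_le_restrict.
  + by case/nap_intervalP: (nap_interval_restrict j xint).
  + by case/nap_intervalP: (nap_interval_restrict j yint).
- apply/nap_leP; split=> //; apply: forest_le_of_restrict.
  + by move=> v; apply: forest_le_graft_out xt.
  + by apply: forest_le_graft_out xt _.
  + by move=> w v /yt.1 /graft_edge.
  + by move=> j; case/nap_leP: (xy j).
Qed.

End Graft.
End Gluing.

Theorem proposition6p7 (T : finType) (k : nat) (r : T)
  (V : 'I_k -> {set T}) (ts : 'I_k -> pforest T) :
  (0 < k)%N ->
  (forall j, is_tree (V j) (ts j)) ->
  (forall i j, i != j -> [disjoint V i & V j]) ->
  (forall j, r \notin V j) ->
  let I := graft_vertices r V in
  let t := graft r V ts in
  (* B(r, t_j), with vertex set {r} u V j *)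
  let I_ j := graft_vertices r (fun _ : 'I_1 => V j) in
  let t_ j := graft r (fun _ : 'I_1 => V j) (fun _ : 'I_1 => ts j) in
  exists (phi : pforest T -> 'I_k -> pforest T)
         (psi : ('I_k -> pforest T) -> pforest T),
    [/\ (forall x, nap_interval I t x -> forall j, nap_interval (I_ j) (t_ j) (phi x j)),
        (forall y, (forall j, nap_interval (I_ j) (t_ j) (y j)) -> nap_interval I t (psi y)),
        (forall x, nap_interval I t x -> psi (phi x) = x),
        (forall y, (forall j, nap_interval (I_ j) (t_ j) (y j)) ->
                   forall j, phi (psi y) j = y j) &
        (forall x y, nap_interval I t x -> nap_interval I t y ->
           (nap_le I x y <-> forall j, nap_le (I_ j) (phi x j) (phi y j)))].
Proof.
(* The statement also holds for k = 0, and only the forest part of is_tree is used. *)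
move=> _ ts_tree V_disj r_notin I t I_ t_.
have ts_forest j : is_forest (V j) (ts j) := (ts_tree j).1.
exists (fun x j => restrict (V j) x), (glue V); split.
- by move=> x xint j; apply: nap_interval_restrict.
- by move=> y; apply: nap_interval_glue.
- move=> x /nap_intervalP [_ _ xt]; apply: glue_restrict => // v.
  exact: forest_le_graft_out xt.
- move=> y yint j; apply: restrict_glue => // v.
  have /nap_intervalP [_ Fy yb] := yint j.
  by apply: forest_branch_out Fy _; apply: forest_le_branch_r yb.
- exact: nap_le_restrictP.
Qed.
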